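(* Let $p,q,r$ be positive integers with $\frac1p+\frac1q+\frac1r\le1$, $M=\max\{p,q,r\}$, and $f(x,y,z)=x^p+y^q+z^r+axyz$ on $\mathbb C^3$, where $a$ is a positive real number. For $\varepsilon>0$ and $t\in\mathbb C$ let $V_a(\varepsilon,t)=f^{-1}(t)\cap D^6_\varepsilon$, where $D^6_\varepsilon$ is the closed ball of radius $\varepsilon$ centered at the origin. If $a>12M$ and $0<|t|<1$, then $V_a(1,t)$ is a Milnor fiber of $f$.
   Context: The Milnor radius $\varepsilon_f$ of $f$ is the supremum of $\varepsilon$ such that every sphere $S^5_\rho$ ($0<\rho\le\varepsilon$) centered at the origin is transverse to $f^{-1}(0)$. A Milnor fiber of $f$ is a set $f^{-1}(\delta e^{i\theta})\cap D^6_\varepsilon$ where $\varepsilon<\varepsilon_f$ and $\delta>0$ is such that $f^{-1}(s)$ meets $S^5_\varepsilon$ transversally for all $0\le|s|\le\delta$. *)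

From Stdlib Require Import Reals.
From Coquelicot Require Import Coquelicot.
Open Scope R_scope.

Definition C3 : Type := (C * C * C)%type.

Definition norm3 (x : C3) : R :=
  let '(x1, x2, x3) := x in sqrt (Cmod x1 ^ 2 + Cmod x2 ^ 2 + Cmod x3 ^ 2).

Definition ball6 (eps : R) (x : C3) : Prop := norm3 x <= eps.
Definition sphere5 (rho : R) (x : C3) : Prop := norm3 x = rho.

Definition add3 (u v : C3) : C3 :=
  let '(u1, u2, u3) := u in let '(v1, v2, v3) := v in
  ((u1 + v1)%C, (u2 + v2)%C, (u3 + v3)%C).

(* Real tangent space of the sphere through x: real orthogonal complement of x,
   i.e. Re <u, x> = 0 for the hermitian product. *)
Definition tangent_sphere (x u : C3) : Prop :=
  let '(x1, x2, x3) := x in let '(u1, u2, u3) := u in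
  Re (u1 * Cconj x1 + u2 * Cconj x2 + u3 * Cconj x3)%C = 0.

Definition is_gradient (f : C3 -> C) (x g : C3) : Prop :=
  let '(x1, x2, x3) := x in let '(g1, g2, g3) := g in
  is_derive (K := C_AbsRing) (fun z : C => f (z, x2, x3)) x1 g1 /\
  is_derive (K := C_AbsRing) (fun z : C => f (x1, z, x3)) x2 g2 /\
  is_derive (K := C_AbsRing) (fun z : C => f (x1, x2, z)) x3 g3.

(* Tangent space at a regular point of the level set f^{-1}(f x): kernel of df_x. *)
Definition kernel_grad (g v : C3) : Prop :=
  let '(g1, g2, g3) := g in let '(v1, v2, v3) := v in
  (g1 * v1 + g2 * v2 + g3 * v3)%C = RtoC 0.

(* The sphere S_rho meets f^{-1}(s) transversally: at every intersection point x,
   x is a regular point of f (so f^{-1}(s) is a smooth manifold near x) and the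
   tangent spaces of the sphere and of f^{-1}(s) span the tangent space R^6 = C^3. *)
Definition transverse (f : C3 -> C) (s : C) (rho : R) : Prop :=
  forall x : C3, sphere5 rho x -> f x = s ->
    exists g : C3, is_gradient f x g /\ g <> (RtoC 0, RtoC 0, RtoC 0) /\
      forall w : C3, exists u v : C3,
        add3 u v = w /\ tangent_sphere x u /\ kernel_grad g v.

Definition milnor_radius (f : C3 -> C) : Rbar :=
  Lub_Rbar (fun eps => 0 < eps /\
    forall rho, 0 < rho -> rho <= eps -> transverse f (RtoC 0) rho).

Definition milnor_fiber (f : C3 -> C) (F : C3 -> Prop) : Prop :=
  exists (eps delta theta : R),
    0 < eps /\ Rbar_lt eps (milnor_radius f) /\ 0 < delta /\
    (forall s : C, Cmod s <= delta -> transverse f s eps) /\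
    (forall x : C3, F x <->
       (f x = (RtoC delta * (cos theta, sin theta))%C /\ ball6 eps x)).

Definition fpqr (p q r : nat) (a : R) (x : C3) : C :=
  let '(x1, x2, x3) := x in
  (Cpow x1 p + Cpow x2 q + Cpow x3 r + RtoC a * x1 * x2 * x3)%C.

Definition Va (p q r : nat) (a eps : R) (t : C) (x : C3) : Prop :=
  fpqr p q r a x = t /\ ball6 eps x.

From Stdlib Require Import Reals Lra Lia Psatz Classical.
From Coquelicot Require Import Coquelicot.
Open Scope R_scope.

(* Transversality of [S_rho] to [f^{-1}(s)] can only fail at a point [x] where
   [grad f(x) = lam * conj x].  Multiplying the [i]-th equation by [x_i] gives
   [p_i x_i^(p_i) + w = lam |x_i|^2] with [w = a x1 x2 x3].  On [f^{-1}(0)],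
   eliminating the [x_i^(p_i)] with [1/p + 1/q + 1/r <= 1] yields
   [|w| <= p_i |x_i|^(p_i)], which for [a > M] forces [|x1 x2 x3| >= 1] and hence
   [|x|^2 >= 3]: the Milnor radius exceeds [1].  On the unit sphere with
   [|f| < 1] one gets [|lam| <= M + 6], so [a |x_j x_k| <= (2M + 6) |x_i|] for all
   [i], i.e. [a <= sqrt 3 (2M + 6)], contradicting [a > 12 M].  Critical points
   with a vanishing coordinate lie on an axis, where [f] is a single monomial. *)

Lemma pow_le_pow_of_le_1 (u : R) (k m : nat) :
  0 <= u <= 1 -> (k <= m)%nat -> u ^ m <= u ^ k.
Proof.
  intros hu hkm; induction hkm as [|m _ IH]; [lra|].
  simpl; assert (0 <= u ^ m) by (apply pow_le; lra); nra.
Qed.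

Lemma pow_le_prod_pow (y u1 u2 u3 : R) (p q r : nat) :
  0 <= y -> y <= u1 ^ p -> y <= u2 ^ q -> y <= u3 ^ r ->
  y ^ (q * r + p * r + p * q) <= (u1 * u2 * u3) ^ (p * q * r).
Proof.
  intros hy h1 h2 h3.
  assert (e1 : y ^ (q * r) <= u1 ^ (p * q * r)).
  { replace (p * q * r)%nat with (p * (q * r))%nat by lia.
    rewrite (pow_mult u1); apply pow_incr; lra. }
  assert (e2 : y ^ (p * r) <= u2 ^ (p * q * r)).
  { replace (p * q * r)%nat with (q * (p * r))%nat by lia.
    rewrite (pow_mult u2); apply pow_incr; lra. }
  assert (e3 : y ^ (p * q) <= u3 ^ (p * q * r)).
  { replace (p * q * r)%nat with (r * (p * q))%nat by lia.
    rewrite (pow_mult u3); apply pow_incr; lra. }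
  assert (0 <= y ^ (q * r)) by (apply pow_le; lra).
  assert (0 <= y ^ (p * r)) by (apply pow_le; lra).
  assert (0 <= y ^ (p * q)) by (apply pow_le; lra).
  rewrite !Rpow_mult_distr, !pow_add.
  apply Rmult_le_compat; [nra|assumption| |assumption].
  apply Rmult_le_compat; assumption.
Qed.

(* With [1/p + 1/q + 1/r <= 1], the bounds give [(L T)^(qr+pr+pq) <= T^(pqr)]
   for [T = u1 u2 u3]; this is impossible when [T < 1] and [L > 1]. *)
Lemma one_le_prod_of_pow_bounds (L u1 u2 u3 : R) (p q r : nat) :
  1 < L -> 0 < u1 -> 0 < u2 -> 0 < u3 -> (0 < p * q * r)%nat ->
  (q * r + p * r + p * q <= p * q * r)%nat ->
  L * (u1 * u2 * u3) <= u1 ^ p -> L * (u1 * u2 * u3) <= u2 ^ q ->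
  L * (u1 * u2 * u3) <= u3 ^ r ->
  1 <= u1 * u2 * u3.
Proof.
  intros hL h1 h2 h3 hN hpqr b1 b2 b3.
  assert (hT : 0 < u1 * u2 * u3) by (repeat apply Rmult_lt_0_compat; lra).
  assert (hdom := pow_le_prod_pow (L * (u1 * u2 * u3)) _ _ _ p q r ltac:(nra) b1 b2 b3).
  set (T := u1 * u2 * u3) in *; set (y := L * T) in *.
  destruct (Rle_lt_dec 1 T) as [|hT1]; [assumption|exfalso].
  destruct (Rle_lt_dec y 1) as [hy1|hy1].
  - assert (y ^ (p * q * r) <= y ^ (q * r + p * r + p * q))
      by (apply pow_le_pow_of_le_1; [split; [unfold y; nra|lra]|exact hpqr]).
    assert (1 < L ^ (p * q * r)) by (apply Rlt_pow_R1; assumption).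
    assert (0 < T ^ (p * q * r)) by (apply pow_lt; assumption).
    assert (y ^ (p * q * r) = L ^ (p * q * r) * T ^ (p * q * r)) by apply Rpow_mult_distr.
    nra.
  - assert (1 <= y ^ (q * r + p * r + p * q)) by (apply pow_R1_Rle; lra).
    assert (T ^ (p * q * r) < 1) by (apply pow_lt_1_compat; [lra|lia]).
    lra.
Qed.

Lemma prod_lt_1_of_sum_lt_3 (A B c : R) :
  0 <= A -> 0 <= B -> 0 <= c -> A + B + c < 3 -> A * B * c < 1.
Proof.
  intros hA hB hc hs.
  assert (hAB : 4 * (A * B) <= (A + B) ^ 2) by (pose proof (pow2_ge_0 (A - B)); nra).
  (* [(3 - c)^2 c - 4 = (c - 1)^2 (c - 4)] *)
  assert ((3 - c) ^ 2 * c <= 4) by (pose proof (pow2_ge_0 (c - 1)); nra).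
  destruct (Req_dec c 0) as [->|hc0]; [lra|].
  assert ((A + B) ^ 2 < (3 - c) ^ 2) by nra.
  nra.
Qed.

Lemma prod_lt_1_of_sum_sq_lt_3 (u1 u2 u3 : R) :
  0 <= u1 -> 0 <= u2 -> 0 <= u3 -> u1 ^ 2 + u2 ^ 2 + u3 ^ 2 < 3 -> u1 * u2 * u3 < 1.
Proof.
  intros h1 h2 h3 hs.
  assert (hsq := prod_lt_1_of_sum_lt_3 _ _ _
                   (pow2_ge_0 u1) (pow2_ge_0 u2) (pow2_ge_0 u3) hs).
  assert (0 <= u1 * u2 * u3) by (repeat apply Rmult_le_pos; assumption).
  nra.
Qed.

Lemma le_of_cross_bounds (a K ui uj uk : R) :
  0 < a -> 0 < ui -> 0 < uj -> 0 < uk ->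
  a * uj * uk <= K * ui -> a * ui * uk <= K * uj -> a * uk <= K.
Proof.
  intros ha hi hj hk e1 e2.
  assert (0 < a * uj * uk) by (repeat apply Rmult_lt_0_compat; assumption).
  assert (hK : 0 < K) by nra.
  assert (a * uj * uk * (a * ui * uk) <= K * ui * (K * uj))
    by (apply Rmult_le_compat; nra).
  assert ((a * uk) ^ 2 <= K ^ 2) by (apply Rmult_le_reg_r with (ui * uj); nra).
  nra.
Qed.

Lemma pairwise_sum_le_prod_of_inv_sum_le_1 (p q r : nat) :
  (0 < p)%nat -> (0 < q)%nat -> (0 < r)%nat -> / INR p + / INR q + / INR r <= 1 ->
  (q * r + p * r + p * q <= p * q * r)%nat.
Proof.
  intros hp hq hr hsum; apply INR_le; rewrite !plus_INR, !mult_INR.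
  apply lt_0_INR in hp, hq, hr.
  replace (INR q * INR r + INR p * INR r + INR p * INR q)
    with ((/ INR p + / INR q + / INR r) * (INR p * INR q * INR r)) by (field; lra).
  rewrite <- (Rmult_1_l (INR p * INR q * INR r)) at 2.
  apply Rmult_le_compat_r; [repeat apply Rmult_le_pos|]; lra.
Qed.

Lemma Cmod_RtoC_nonneg (c : R) : 0 <= c -> Cmod (RtoC c) = c.
Proof. intro h; rewrite Cmod_R; apply Rabs_pos_eq; exact h. Qed.

Lemma Cmod_sub_le (u v : C) : Cmod (u - v) <= Cmod u + Cmod v.
Proof.
  unfold Cminus; eapply Rle_trans; [apply Cmod_triangle|].
  rewrite Cmod_opp; lra.
Qed.

Lemma Cmod_triangle3 (u v w : C) : Cmod (u + v + w) <= Cmod u + Cmod v + Cmod w.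
Proof.
  eapply Rle_trans; [apply Cmod_triangle|].
  pose proof (Cmod_triangle u v); lra.
Qed.

Lemma Cpow_0_l (n : nat) : (0 < n)%nat -> (RtoC 0 ^ n)%C = 0.
Proof. intro hn; destruct n as [|n]; [lia|]; rewrite Cpow_S; ring. Qed.

Lemma Cconj_0 : Cconj (RtoC 0) = 0.
Proof. apply injective_projections; simpl; ring. Qed.

Lemma exists_polar_form (t : C) :
  0 < Cmod t -> exists theta : R, (RtoC (Cmod t) * (cos theta, sin theta))%C = t.
Proof.
  intro ht; destruct t as [t1 t2]; set (m := Cmod (t1, t2)) in *.
  assert (hm : m ^ 2 = t1 ^ 2 + t2 ^ 2) by apply Cmod2_alt.
  set (c := t1 / m); set (sn := t2 / m).
  assert (hcs : c ^ 2 + sn ^ 2 = 1)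
    by (unfold c, sn; field_simplify; [rewrite <- hm; field|]; lra).
  assert (hc : -1 <= c <= 1) by nra.
  assert (hsin : sqrt (1 - c²) = Rabs sn)
    by (rewrite <- sqrt_Rsqr_abs; f_equal; unfold Rsqr; nra).
  destruct (Rle_dec 0 t2) as [h2|h2].
  - exists (acos c); rewrite cos_acos, sin_acos, hsin by exact hc.
    rewrite Rabs_pos_eq by (unfold sn; apply Rdiv_le_0_compat; lra).
    unfold c, sn; apply injective_projections; simpl; field; lra.
  - exists (- acos c); rewrite cos_neg, sin_neg, cos_acos, sin_acos, hsin by exact hc.
    rewrite Rabs_left
      by (unfold sn, Rdiv; pose proof (Rinv_0_lt_compat m ht); nra).
    unfold c, sn; apply injective_projections; simpl; field; lra.
Qed.

Definition conj3 (x : C3) : C3 :=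
  let '(x1, x2, x3) := x in (Cconj x1, Cconj x2, Cconj x3).

Definition scal3 (c : C) (x : C3) : C3 :=
  let '(x1, x2, x3) := x in ((c * x1)%C, (c * x2)%C, (c * x3)%C).

(* Bilinear, not hermitian. *)
Definition dot3 (u v : C3) : C :=
  let '(u1, u2, u3) := u in let '(v1, v2, v3) := v in (u1 * v1 + u2 * v2 + u3 * v3)%C.

Definition sqnorm3 (x : C3) : R :=
  let '(x1, x2, x3) := x in Cmod x1 ^ 2 + Cmod x2 ^ 2 + Cmod x3 ^ 2.

Lemma pair3_inj (u1 u2 u3 v1 v2 v3 : C) :
  (u1, u2, u3) = (v1, v2, v3) :> C3 -> u1 = v1 /\ u2 = v2 /\ u3 = v3.
Proof. intro h; injection h; auto. Qed.

Lemma sphere5_sqnorm3 (rho : R) (x : C3) : sphere5 rho x -> sqnorm3 x = rho ^ 2.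
Proof.
  destruct x as [[x1 x2] x3]; unfold sphere5, norm3, sqnorm3; intros <-.
  rewrite pow2_sqrt; [reflexivity|].
  pose proof (pow2_ge_0 (Cmod x1)); pose proof (pow2_ge_0 (Cmod x2));
    pose proof (pow2_ge_0 (Cmod x3)); lra.
Qed.

Lemma conj3_neq_0_of_sphere5 (rho : R) (x : C3) :
  0 < rho -> sphere5 rho x -> conj3 x <> (RtoC 0, RtoC 0, RtoC 0).
Proof.
  intros hrho hx e; apply sphere5_sqnorm3 in hx; apply (f_equal sqnorm3) in e.
  destruct x as [[x1 x2] x3]; cbn [sqnorm3 conj3] in hx, e.
  rewrite !Cmod_conj, Cmod_0 in e.
  nra.
Qed.

Lemma eq_div_mul_of_cross (gi hi gj hj : C) :
  hi <> 0 -> (hi * gj = hj * gi)%C -> gj = (gi / hi * hj)%C.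
Proof.
  intros hi0 e.
  transitivity (hi * gj / hi)%C; [field; exact hi0|].
  rewrite e; field; exact hi0.
Qed.

(* The candidates [e_i x g] lie in [ker g]; if [h] kills all of them, every
   2x2 minor of [(g, h)] vanishes and [g] is a multiple of [h]. *)
Lemma kernel_vector_not_orthogonal (g h : C3) :
  h <> (RtoC 0, RtoC 0, RtoC 0) -> (forall lam, g <> scal3 lam h) ->
  exists v, dot3 g v = 0 /\ dot3 h v <> 0.
Proof.
  destruct g as [[g1 g2] g3], h as [[h1 h2] h3]; intros hnz hnp; cbn [dot3].
  destruct (classic (h1 * g2 = h2 * g1)%C) as [m12|m12].
  2: { exists (g2, (- g1)%C, RtoC 0); split; [ring|].
       intro e; apply m12; transitivity (h1 * g2 + h2 * - g1 + h3 * 0 + h2 * g1)%C;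
         [ring|rewrite e; ring]. }
  destruct (classic (h1 * g3 = h3 * g1)%C) as [m13|m13].
  2: { exists (g3, RtoC 0, (- g1)%C); split; [ring|].
       intro e; apply m13; transitivity (h1 * g3 + h2 * 0 + h3 * - g1 + h3 * g1)%C;
         [ring|rewrite e; ring]. }
  destruct (classic (h2 * g3 = h3 * g2)%C) as [m23|m23].
  2: { exists (RtoC 0, g3, (- g2)%C); split; [ring|].
       intro e; apply m23; transitivity (h1 * 0 + h2 * g3 + h3 * - g2 + h3 * g2)%C;
         [ring|rewrite e; ring]. }
  exfalso.
  destruct (classic (h1 = 0)) as [z1|n1].
  2: { apply (hnp (g1 / h1)%C); cbn [scal3]; f_equal; [f_equal|];
       apply eq_div_mul_of_cross; auto. }
  destruct (classic (h2 = 0)) as [z2|n2].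
  2: { apply (hnp (g2 / h2)%C); cbn [scal3]; f_equal; [f_equal|];
       apply eq_div_mul_of_cross; auto. }
  destruct (classic (h3 = 0)) as [z3|n3].
  2: { apply (hnp (g3 / h3)%C); cbn [scal3]; f_equal; [f_equal|];
       apply eq_div_mul_of_cross; auto. }
  subst; apply hnz; reflexivity.
Qed.

Lemma real_tangent_plus_kernel (g h v0 : C3) :
  dot3 g v0 = 0 -> dot3 h v0 <> 0 ->
  forall w, exists u v, add3 u v = w /\ Re (dot3 u h) = 0 /\ dot3 g v = 0.
Proof.
  intros hg hh w.
  set (c := (RtoC (Re (dot3 w h)) / dot3 h v0)%C).
  destruct w as [[w1 w2] w3], v0 as [[v1 v2] v3].
  exists ((w1 - c * v1)%C, (w2 - c * v2)%C, (w3 - c * v3)%C), ((c * v1)%C, (c * v2)%C, (c * v3)%C).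
  destruct g as [[g1 g2] g3], h as [[h1 h2] h3]; cbn [dot3 add3] in *; repeat split.
  - f_equal; [f_equal|]; ring.
  - replace ((w1 - c * v1) * h1 + (w2 - c * v2) * h2 + (w3 - c * v3) * h3)%C
      with ((w1 * h1 + w2 * h2 + w3 * h3) - RtoC (Re (w1 * h1 + w2 * h2 + w3 * h3)))%C
      by (unfold c; field; exact hh).
    destruct (w1 * h1 + w2 * h2 + w3 * h3)%C; simpl; ring.
  - transitivity (c * (g1 * v1 + g2 * v2 + g3 * v3))%C; [ring|rewrite hg; ring].
Qed.

(* The real tangent space of the sphere at [x] is [{u | Re (u . conj x) = 0}];
   it fails to span together with [ker g] exactly when [g] is proportional to
   [conj x]. *)
Lemma transverse_of_no_critical_point (f : C3 -> C) (G : C3 -> C3) (s : C) (rho : R) :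
  0 < rho -> (forall x, is_gradient f x (G x)) ->
  (forall x, sphere5 rho x -> f x = s -> forall lam, G x <> scal3 lam (conj3 x)) ->
  transverse f s rho.
Proof.
  intros hrho hG hcrit x hx hfx.
  exists (G x); split; [apply hG|split].
  - intro e; apply (hcrit x hx hfx 0); rewrite e.
    destruct x as [[x1 x2] x3]; cbn [conj3 scal3]; f_equal; [f_equal|]; ring.
  - destruct (kernel_vector_not_orthogonal (G x) (conj3 x)
                (conj3_neq_0_of_sphere5 rho x hrho hx) (hcrit x hx hfx))
      as [v0 [hv0 hxv0]].
    intro w; destruct (real_tangent_plus_kernel _ _ _ hv0 hxv0 w) as [u [v [huv [hu hv]]]].
    exists u, v; split; [exact huv|].
    destruct x as [[x1 x2] x3], u as [[u1 u2] u3], v as [[v1 v2] v3], (G _) as [[g1 g2] g3].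
    split; assumption.
Qed.

Lemma milnor_radius_gt (f : C3 -> C) (eps eps' : R) :
  eps < eps' -> 0 < eps' ->
  (forall rho, 0 < rho -> rho <= eps' -> transverse f (RtoC 0) rho) ->
  Rbar_lt eps (milnor_radius f).
Proof.
  intros hlt hpos htr; unfold milnor_radius.
  destruct (Lub_Rbar_correct (fun e => 0 < e /\
    forall rho, 0 < rho -> rho <= e -> transverse f (RtoC 0) rho)) as [hub _].
  specialize (hub eps' (conj hpos htr)).
  destruct (Lub_Rbar _); simpl in *; lra.
Qed.

(* [is_derive_mult] only exists for values in [AbsRing_NormedModule C_AbsRing],
   whereas [is_gradient] is stated in [C_NormedModule]. *)
Lemma is_derive_AbsRing_C (f : C -> C) (z l : C) :
  is_derive (K := C_AbsRing) (V := AbsRing_NormedModule C_AbsRing) f z l ->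
  is_derive (K := C_AbsRing) (V := C_NormedModule) f z l.
Proof.
  intros [_ hlim]; split; [apply is_linear_scal_l|exact hlim].
Qed.

Lemma is_derive_Cpow (n : nat) (z : C) :
  is_derive (K := C_AbsRing) (V := AbsRing_NormedModule C_AbsRing)
    (fun w => w ^ n)%C z (RtoC (INR n) * z ^ pred n)%C.
Proof.
  induction n as [|n IH].
  - replace (RtoC (INR 0) * z ^ pred 0)%C with (RtoC 0) by (simpl; ring).
    exact (is_derive_const (K := C_AbsRing) (V := AbsRing_NormedModule C_AbsRing) (RtoC 1) z).
  - apply (is_derive_ext (fun w => mult w (w ^ n)%C)); [reflexivity|].
    replace (RtoC (INR (S n)) * z ^ pred (S n))%C
      with (plus (mult one (z ^ n)%C) (mult z (RtoC (INR n) * z ^ pred n)%C)).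
    + apply (is_derive_mult (K := C_AbsRing));
        [apply (is_derive_id (K := C_AbsRing))|exact IH|apply Cmult_comm].
    + change (1 * z ^ n + z * (RtoC (INR n) * z ^ pred n) = RtoC (INR (S n)) * z ^ n)%C.
      rewrite S_INR, RtoC_plus.
      destruct n as [|n]; simpl; ring.
Qed.

Lemma is_derive_Cpow_affine (n : nat) (A B z : C) :
  is_derive (K := C_AbsRing) (V := C_NormedModule)
    (fun w => w ^ n + A * w + B)%C z (RtoC (INR n) * z ^ pred n + A)%C.
Proof.
  apply is_derive_AbsRing_C.
  pose proof (is_derive_mult (K := C_AbsRing) (fun _ => A) (fun w => w) z _ _
                (is_derive_const (K := C_AbsRing) (V := AbsRing_NormedModule C_AbsRing) A z)
                (is_derive_id (K := C_AbsRing) z) Cmult_comm) as hlin.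
  pose proof (is_derive_plus (V := AbsRing_NormedModule C_AbsRing) _ _ z _ _
                (is_derive_Cpow n z) hlin) as hsum.
  pose proof (is_derive_plus (V := AbsRing_NormedModule C_AbsRing) _ _ z _ _ hsum
                (is_derive_const (K := C_AbsRing) (V := AbsRing_NormedModule C_AbsRing) B z))
    as hall.
  match type of hall with
  | is_derive _ _ ?l => replace (RtoC (INR n) * z ^ pred n + A)%C with l
  end.
  - exact hall.
  - change (RtoC (INR n) * z ^ pred n + (0 * z + A * 1) + 0 = RtoC (INR n) * z ^ pred n + A)%C.
    ring.
Qed.

Definition grad_fpqr (p q r : nat) (a : R) (x : C3) : C3 :=
  let '(x1, x2, x3) := x in
  ((RtoC (INR p) * x1 ^ pred p + RtoC a * x2 * x3)%C,
   (RtoC (INR q) * x2 ^ pred q + RtoC a * x1 * x3)%C,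
   (RtoC (INR r) * x3 ^ pred r + RtoC a * x1 * x2)%C).

Lemma is_gradient_fpqr (p q r : nat) (a : R) (x : C3) :
  is_gradient (fpqr p q r a) x (grad_fpqr p q r a x).
Proof.
  destruct x as [[x1 x2] x3]; split; [|split].
  - apply (is_derive_ext (fun w => w ^ p + RtoC a * x2 * x3 * w + (x2 ^ q + x3 ^ r))%C);
      [|apply is_derive_Cpow_affine].
    intro w; change (w ^ p + RtoC a * x2 * x3 * w + (x2 ^ q + x3 ^ r)
                     = w ^ p + x2 ^ q + x3 ^ r + RtoC a * w * x2 * x3)%C; ring.
  - apply (is_derive_ext (fun w => w ^ q + RtoC a * x1 * x3 * w + (x1 ^ p + x3 ^ r))%C);
      [|apply is_derive_Cpow_affine].
    intro w; change (w ^ q + RtoC a * x1 * x3 * w + (x1 ^ p + x3 ^ r)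
                     = x1 ^ p + w ^ q + x3 ^ r + RtoC a * x1 * w * x3)%C; ring.
  - apply (is_derive_ext (fun w => w ^ r + RtoC a * x1 * x2 * w + (x1 ^ p + x2 ^ q))%C);
      [|apply is_derive_Cpow_affine].
    intro w; change (w ^ r + RtoC a * x1 * x2 * w + (x1 ^ p + x2 ^ q)
                     = x1 ^ p + x2 ^ q + w ^ r + RtoC a * x1 * x2 * w)%C; ring.
Qed.

Lemma critical_equation_mul (c a : R) (n : nat) (xi xj xk lam w : C) :
  (0 < n)%nat -> w = (RtoC a * xi * xj * xk)%C ->
  (RtoC c * xi ^ pred n + RtoC a * xj * xk = lam * Cconj xi)%C ->
  (RtoC c * xi ^ n + w = lam * RtoC (Cmod xi ^ 2))%C.
Proof.
  intros hn -> e; destruct n as [|n]; [lia|].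
  rewrite Cmod2_conj, Cpow_S; simpl pred in e.
  transitivity (xi * (RtoC c * xi ^ n + RtoC a * xj * xk))%C; [ring|].
  rewrite e; ring.
Qed.

Lemma critical_cross_term_le (c a : R) (m : nat) (xi xj xk lam : C) :
  0 <= c -> 0 <= a ->
  (RtoC c * xi ^ m + RtoC a * xj * xk = lam * Cconj xi)%C ->
  a * Cmod xj * Cmod xk <= Cmod lam * Cmod xi + c * Cmod xi ^ m.
Proof.
  intros hc ha e.
  assert (e' : (RtoC a * xj * xk = lam * Cconj xi - RtoC c * xi ^ m)%C)
    by (rewrite <- e; ring).
  replace (a * Cmod xj * Cmod xk) with (Cmod (RtoC a * xj * xk))
    by (rewrite !Cmod_mult, Cmod_RtoC_nonneg; [ring|exact ha]).
  rewrite e'; eapply Rle_trans; [apply Cmod_sub_le|].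
  rewrite !Cmod_mult, Cmod_conj, Cmod_RtoC_nonneg, Cmod_pow by exact hc; lra.
Qed.

Lemma critical_equation_at_0 (n : nat) (c a : R) (xj xk lam : C) :
  (2 <= n)%nat -> a <> 0 ->
  (RtoC c * RtoC 0 ^ pred n + RtoC a * xj * xk = lam * Cconj (RtoC 0))%C ->
  xj = 0 \/ xk = 0.
Proof.
  intros hn ha e; rewrite Cpow_0_l, Cconj_0 in e by lia.
  assert (ha' : RtoC a <> 0) by (intro h; apply RtoC_inj in h; contradiction).
  assert (hz : (RtoC a * xj * xk = 0)%C)
    by (transitivity (c * 0 + RtoC a * xj * xk)%C; [ring|rewrite e; ring]).
  destruct (classic (xj = 0)) as [|hj]; [left; assumption|right].
  apply NNPP; intro hk; exact (Cmult_neq_0 _ _ (Cmult_neq_0 _ _ ha' hj) hk hz).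
Qed.

(* Eliminating the [X_i] shows [lam * sum_i U_i / c_i = - (1 - sum_i 1 / c_i) w],
   hence [c1 X1 = - w (1 + t)] for some [t >= 0]. *)
Lemma Cmod_le_of_critical_system (c1 c2 c3 U1 U2 U3 : R) (X1 X2 X3 w lam : C) :
  0 < c1 -> 0 < c2 -> 0 < c3 -> 0 < U1 -> 0 < U2 -> 0 < U3 ->
  c2 * c3 + c1 * c3 + c1 * c2 <= c1 * c2 * c3 ->
  (RtoC c1 * X1 + w = lam * RtoC U1)%C -> (RtoC c2 * X2 + w = lam * RtoC U2)%C ->
  (RtoC c3 * X3 + w = lam * RtoC U3)%C -> (X1 + X2 + X3 + w = 0)%C ->
  Cmod w <= c1 * Cmod X1.
Proof.
  intros h1 h2 h3 hU1 hU2 hU3 hc e1 e2 e3 hsum.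
  set (beta := U1 * c2 * c3 + U2 * c1 * c3 + U3 * c1 * c2).
  set (d := c1 * c2 * c3 - (c2 * c3 + c1 * c3 + c1 * c2)).
  assert (hbeta : 0 < beta)
    by (unfold beta; repeat apply Rplus_lt_0_compat; repeat apply Rmult_lt_0_compat; assumption).
  assert (hlam : (lam * RtoC beta = - RtoC d * w)%C).
  { transitivity ((lam * RtoC U1) * (RtoC c2 * RtoC c3) + (lam * RtoC U2) * (RtoC c1 * RtoC c3)
                  + (lam * RtoC U3) * (RtoC c1 * RtoC c2))%C;
      [unfold beta; rewrite !RtoC_plus, !RtoC_mult; ring|].
    rewrite <- e1, <- e2, <- e3.
    replace X1 with (- w - X2 - X3)%C
      by (symmetry; transitivity (X1 + X2 + X3 + w - w - X2 - X3)%C; [ring|rewrite hsum; ring]).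
    unfold d; rewrite !RtoC_minus, !RtoC_plus, !RtoC_mult. ring. }
  assert (hX1 : (RtoC beta * (RtoC c1 * X1) = - w * RtoC (d * U1 + beta))%C).
  { replace (RtoC c1 * X1)%C with (lam * RtoC U1 - w)%C by (rewrite <- e1; ring).
    transitivity ((lam * RtoC beta) * RtoC U1 - w * RtoC beta)%C; [ring|].
    rewrite hlam, RtoC_plus, RtoC_mult; ring. }
  assert (hd : 0 <= d * U1) by (unfold d; apply Rmult_le_pos; lra).
  apply (f_equal Cmod) in hX1.
  rewrite !Cmod_mult, Cmod_opp, !Cmod_RtoC_nonneg in hX1 by lra.
  pose proof (Cmod_ge_0 w); pose proof (Cmod_ge_0 X1).
  apply Rmult_le_reg_l with beta; [exact hbeta|nra].
Qed.

Section CriticalPoints.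

Variables (p q r : nat) (a M : R).
Hypotheses (hp : (2 <= p)%nat) (hq : (2 <= q)%nat) (hr : (2 <= r)%nat)
  (hpqr : (q * r + p * r + p * q <= p * q * r)%nat)
  (hpM : INR p <= M) (hqM : INR q <= M) (hrM : INR r <= M) (haM : 12 * M < a).

Lemma two_le_M : 2 <= M.
Proof. apply Rle_trans with (INR p); [apply (le_INR 2); exact hp|exact hpM]. Qed.

Lemma pairwise_sum_le_prod_INR :
  INR q * INR r + INR p * INR r + INR p * INR q <= INR p * INR q * INR r.
Proof. rewrite <- !mult_INR, <- !plus_INR; apply le_INR; exact hpqr. Qed.

Lemma critical_identities (x1 x2 x3 lam : C) :
  grad_fpqr p q r a (x1, x2, x3) = scal3 lam (conj3 (x1, x2, x3)) ->
  let w := (RtoC a * x1 * x2 * x3)%C in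
  (RtoC (INR p) * x1 ^ p + w = lam * RtoC (Cmod x1 ^ 2))%C /\
  (RtoC (INR q) * x2 ^ q + w = lam * RtoC (Cmod x2 ^ 2))%C /\
  (RtoC (INR r) * x3 ^ r + w = lam * RtoC (Cmod x3 ^ 2))%C.
Proof.
  intros e w; destruct (pair3_inj _ _ _ _ _ _ e) as [e1 [e2 e3]].
  split; [|split].
  - apply (critical_equation_mul (INR p) a p x1 x2 x3 lam w); [lia|reflexivity|exact e1].
  - apply (critical_equation_mul (INR q) a q x2 x1 x3 lam w); [lia|unfold w; ring|exact e2].
  - apply (critical_equation_mul (INR r) a r x3 x1 x2 lam w); [lia|unfold w; ring|exact e3].
Qed.

Lemma degenerate_critical_point_monomial (x1 x2 x3 lam : C) :
  grad_fpqr p q r a (x1, x2, x3) = scal3 lam (conj3 (x1, x2, x3)) ->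
  x1 = 0 \/ x2 = 0 \/ x3 = 0 ->
  exists z n, (0 < n)%nat /\ fpqr p q r a (x1, x2, x3) = (z ^ n)%C /\
              sqnorm3 (x1, x2, x3) = Cmod z ^ 2.
Proof.
  intros e hz; destruct (pair3_inj _ _ _ _ _ _ e) as [e1 [e2 e3]].
  assert (ha : a <> 0) by (pose proof two_le_M; lra).
  assert (two : (x1 = 0 /\ x2 = 0) \/ (x1 = 0 /\ x3 = 0) \/ (x2 = 0 /\ x3 = 0)).
  { destruct hz as [z|[z|z]]; rewrite z in *.
    - destruct (critical_equation_at_0 p _ _ _ _ _ hp ha e1); tauto.
    - destruct (critical_equation_at_0 q _ _ _ _ _ hq ha e2); tauto.
    - destruct (critical_equation_at_0 r _ _ _ _ _ hr ha e3); tauto. }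
  destruct two as [[z z']|[[z z']|[z z']]]; rewrite z, z';
    [exists x3, r|exists x2, q|exists x1, p];
    cbn [fpqr sqnorm3]; rewrite ?Cpow_0_l, Cmod_0 by lia;
    (split; [lia|split; ring]).
Qed.

Lemma critical_zero_fiber_prod_ge_1 (x1 x2 x3 lam : C) :
  grad_fpqr p q r a (x1, x2, x3) = scal3 lam (conj3 (x1, x2, x3)) ->
  x1 <> 0 -> x2 <> 0 -> x3 <> 0 -> fpqr p q r a (x1, x2, x3) = 0 ->
  1 <= Cmod x1 * Cmod x2 * Cmod x3.
Proof.
  intros e n1 n2 n3 hf; destruct (critical_identities _ _ _ _ e) as [G1 [G2 G3]].
  set (w := (RtoC a * x1 * x2 * x3)%C) in *.
  apply Cmod_gt_0 in n1, n2, n3.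
  assert (hP : 0 < INR p) by (apply lt_0_INR; lia).
  assert (hQ : 0 < INR q) by (apply lt_0_INR; lia).
  assert (hR : 0 < INR r) by (apply lt_0_INR; lia).
  pose proof pairwise_sum_le_prod_INR.
  assert (A1 := Cmod_le_of_critical_system _ _ _ _ _ _ _ _ _ w lam hP hQ hR
    (pow_lt _ 2 n1) (pow_lt _ 2 n2) (pow_lt _ 2 n3) ltac:(lra) G1 G2 G3 hf).
  assert (A2 := Cmod_le_of_critical_system _ _ _ _ _ _ _ _ _ w lam hQ hP hR
    (pow_lt _ 2 n2) (pow_lt _ 2 n1) (pow_lt _ 2 n3) ltac:(lra) G2 G1 G3
    ltac:(rewrite <- hf; cbn [fpqr]; unfold w; ring)).
  assert (A3 := Cmod_le_of_critical_system _ _ _ _ _ _ _ _ _ w lam hR hP hQ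
    (pow_lt _ 2 n3) (pow_lt _ 2 n1) (pow_lt _ 2 n2) ltac:(lra) G3 G1 G2
    ltac:(rewrite <- hf; cbn [fpqr]; unfold w; ring)).
  assert (hw : Cmod w = a * (Cmod x1 * Cmod x2 * Cmod x3))
    by (unfold w; rewrite !Cmod_mult, Cmod_RtoC_nonneg by lra; ring).
  rewrite hw, Cmod_pow in A1, A2, A3.
  pose proof two_le_M.
  set (T := Cmod x1 * Cmod x2 * Cmod x3) in *.
  assert (hscale : forall c X, c <= M -> 0 <= X -> a * T <= c * X -> a / M * T <= X).
  { intros c X hc hX h; apply Rmult_le_reg_r with M; [lra|].
    replace (a / M * T * M) with (a * T) by (field; lra); nra. }
  apply (one_le_prod_of_pow_bounds (a / M) _ _ _ p q r); try assumption.
  - apply Rmult_lt_reg_r with M; [lra|]; field_simplify; lra.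
  - lia.
  - apply (hscale (INR p)); [assumption|apply pow_le; lra|assumption].
  - apply (hscale (INR q)); [assumption|apply pow_le; lra|assumption].
  - apply (hscale (INR r)); [assumption|apply pow_le; lra|assumption].
Qed.

Lemma critical_multiplier_le (x1 x2 x3 lam : C) :
  grad_fpqr p q r a (x1, x2, x3) = scal3 lam (conj3 (x1, x2, x3)) ->
  sqnorm3 (x1, x2, x3) = 1 -> Cmod (fpqr p q r a (x1, x2, x3)) < 1 ->
  Cmod lam <= M + 6.
Proof.
  intros e hs hf; destruct (critical_identities _ _ _ _ e) as [G1 [G2 G3]].
  cbn [sqnorm3] in hs; set (w := (RtoC a * x1 * x2 * x3)%C) in *.
  pose proof (Cmod_ge_0 x1); pose proof (Cmod_ge_0 x2); pose proof (Cmod_ge_0 x3).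
  pose proof (pow2_ge_0 (Cmod x1)); pose proof (pow2_ge_0 (Cmod x2));
    pose proof (pow2_ge_0 (Cmod x3)).
  assert (d1 : Cmod x1 ^ p <= Cmod x1 ^ 2) by (apply pow_le_pow_of_le_1; [split; nra|exact hp]).
  assert (d2 : Cmod x2 ^ q <= Cmod x2 ^ 2) by (apply pow_le_pow_of_le_1; [split; nra|exact hq]).
  assert (d3 : Cmod x3 ^ r <= Cmod x3 ^ 2) by (apply pow_le_pow_of_le_1; [split; nra|exact hr]).
  assert (hw : Cmod w < 2).
  { replace w with (fpqr p q r a (x1, x2, x3) - (x1 ^ p + x2 ^ q + x3 ^ r))%C
      by (cbn [fpqr]; unfold w; ring).
    eapply Rle_lt_trans; [apply Cmod_sub_le|].
    pose proof (Cmod_triangle3 (x1 ^ p) (x2 ^ q) (x3 ^ r)) as ht; rewrite !Cmod_pow in ht.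
    lra. }
  replace lam with ((RtoC (INR p) * x1 ^ p + w) + (RtoC (INR q) * x2 ^ q + w)
                    + (RtoC (INR r) * x3 ^ r + w))%C
    by (rewrite G1, G2, G3;
        transitivity (lam * RtoC (Cmod x1 ^ 2 + Cmod x2 ^ 2 + Cmod x3 ^ 2))%C;
        [rewrite !RtoC_plus; ring|rewrite hs; ring]).
  eapply Rle_trans; [apply Cmod_triangle3|].
  pose proof (Cmod_triangle (RtoC (INR p) * x1 ^ p) w) as t1;
    pose proof (Cmod_triangle (RtoC (INR q) * x2 ^ q) w) as t2;
    pose proof (Cmod_triangle (RtoC (INR r) * x3 ^ r) w) as t3.
  rewrite !Cmod_mult, !Cmod_pow, !Cmod_RtoC_nonneg in t1, t2, t3 by apply pos_INR.
  assert (INR p * Cmod x1 ^ p <= M * Cmod x1 ^ 2)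
    by (apply Rmult_le_compat; [apply pos_INR|apply pow_le, Cmod_ge_0|exact hpM|exact d1]).
  assert (INR q * Cmod x2 ^ q <= M * Cmod x2 ^ 2)
    by (apply Rmult_le_compat; [apply pos_INR|apply pow_le, Cmod_ge_0|exact hqM|exact d2]).
  assert (INR r * Cmod x3 ^ r <= M * Cmod x3 ^ 2)
    by (apply Rmult_le_compat; [apply pos_INR|apply pow_le, Cmod_ge_0|exact hrM|exact d3]).
  assert (M * Cmod x1 ^ 2 + M * Cmod x2 ^ 2 + M * Cmod x3 ^ 2 = M)
    by (rewrite <- !Rmult_plus_distr_l, hs; ring).
  lra.
Qed.

Lemma critical_unit_sphere_value_ge_1 (x1 x2 x3 lam : C) :
  grad_fpqr p q r a (x1, x2, x3) = scal3 lam (conj3 (x1, x2, x3)) ->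
  x1 <> 0 -> x2 <> 0 -> x3 <> 0 -> sqnorm3 (x1, x2, x3) = 1 ->
  1 <= Cmod (fpqr p q r a (x1, x2, x3)).
Proof.
  intros e n1 n2 n3 hs; apply Rnot_lt_le; intro hf.
  assert (hlam := critical_multiplier_le _ _ _ _ e hs hf).
  destruct (pair3_inj _ _ _ _ _ _ e) as [e1 [e2 e3]]; cbn [sqnorm3] in hs.
  apply Cmod_gt_0 in n1, n2, n3.
  pose proof two_le_M.
  assert (hcross : forall (c : R) (n : nat) (xi xj xk : C),
            0 <= c <= M -> (2 <= n)%nat -> 0 < Cmod xi <= 1 ->
            (RtoC c * xi ^ pred n + RtoC a * xj * xk = lam * Cconj xi)%C ->
            a * Cmod xj * Cmod xk <= (2 * M + 6) * Cmod xi).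
  { intros c n xi xj xk hc hn hxi ei.
    pose proof (critical_cross_term_le c a _ _ _ _ _ (proj1 hc) ltac:(lra) ei).
    assert (Cmod xi ^ pred n <= Cmod xi)
      by (rewrite <- (pow_1 (Cmod xi)) at 2; apply pow_le_pow_of_le_1; [lra|lia]).
    pose proof (Cmod_ge_0 lam); nra. }
  pose proof (pow2_ge_0 (Cmod x1)); pose proof (pow2_ge_0 (Cmod x2));
    pose proof (pow2_ge_0 (Cmod x3)).
  pose proof (hcross _ p x1 x2 x3 (conj (pos_INR p) hpM) hp ltac:(split; nra) e1).
  pose proof (hcross _ q x2 x1 x3 (conj (pos_INR q) hqM) hq ltac:(split; nra) e2).
  pose proof (hcross _ r x3 x1 x2 (conj (pos_INR r) hrM) hr ltac:(split; nra) e3).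
  assert (L3 := le_of_cross_bounds a (2 * M + 6) _ _ _ ltac:(lra) n1 n2 n3
                  ltac:(lra) ltac:(lra)).
  assert (L1 := le_of_cross_bounds a (2 * M + 6) _ _ _ ltac:(lra) n2 n3 n1
                  ltac:(lra) ltac:(lra)).
  assert (L2 := le_of_cross_bounds a (2 * M + 6) _ _ _ ltac:(lra) n1 n3 n2
                  ltac:(lra) ltac:(lra)).
  (* [a^2 = a^2 |x|^2 <= 3 (2M + 6)^2 < (12 M)^2] *)
  assert (a ^ 2 <= 3 * (2 * M + 6) ^ 2) by nra.
  nra.
Qed.

Lemma no_critical_point_zero_fiber (x : C3) (lam : C) :
  fpqr p q r a x = 0 -> 0 < sqnorm3 x < 3 ->
  grad_fpqr p q r a x <> scal3 lam (conj3 x).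
Proof.
  destruct x as [[x1 x2] x3]; intros hf hs e.
  destruct (classic (x1 = 0 \/ x2 = 0 \/ x3 = 0)) as [hz|hnz].
  - destruct (degenerate_critical_point_monomial _ _ _ _ e hz) as [z [n [hn [hfz hsz]]]].
    rewrite hfz in hf; rewrite hsz in hs.
    destruct (classic (z = 0)) as [z0|z0].
    + rewrite z0, Cmod_0 in hs; lra.
    + exact (Cpow_nz z n z0 hf).
  - assert (n1 : x1 <> 0) by tauto; assert (n2 : x2 <> 0) by tauto;
      assert (n3 : x3 <> 0) by tauto.
    pose proof (critical_zero_fiber_prod_ge_1 _ _ _ _ e n1 n2 n3 hf).
    cbn [sqnorm3] in hs.
    pose proof (prod_lt_1_of_sum_sq_lt_3 (Cmod x1) (Cmod x2) (Cmod x3)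
                  (Cmod_ge_0 _) (Cmod_ge_0 _) (Cmod_ge_0 _) (proj2 hs)).
    lra.
Qed.

Lemma no_critical_point_unit_sphere (x : C3) (lam : C) :
  sqnorm3 x = 1 -> Cmod (fpqr p q r a x) < 1 ->
  grad_fpqr p q r a x <> scal3 lam (conj3 x).
Proof.
  destruct x as [[x1 x2] x3]; intros hs hf e.
  destruct (classic (x1 = 0 \/ x2 = 0 \/ x3 = 0)) as [hz|hnz].
  - destruct (degenerate_critical_point_monomial _ _ _ _ e hz) as [z [n [hn [hfz hsz]]]].
    rewrite hfz, Cmod_pow in hf; rewrite hsz in hs.
    assert (hz1 : Cmod z = 1) by (pose proof (Cmod_ge_0 z); nra).
    rewrite hz1, pow1 in hf; lra.
  - assert (n1 : x1 <> 0) by tauto; assert (n2 : x2 <> 0) by tauto;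
      assert (n3 : x3 <> 0) by tauto.
    pose proof (critical_unit_sphere_value_ge_1 _ _ _ _ e n1 n2 n3 hs); lra.
Qed.

End CriticalPoints.

Theorem lemma1p8 (p q r : nat) (a : R) (t : C) :
  (0 < p)%nat -> (0 < q)%nat -> (0 < r)%nat ->
  / INR p + / INR q + / INR r <= 1 ->
  0 < a ->
  a > 12 * INR (Nat.max p (Nat.max q r)) ->
  0 < Cmod t < 1 ->
  milnor_fiber (fpqr p q r a) (Va p q r a 1 t).
Proof.
  intros hp hq hr hsum ha hM ht.
  assert (hpqr := pairwise_sum_le_prod_of_inv_sum_le_1 p q r hp hq hr hsum).
  assert (hp2 : (2 <= p)%nat) by nia.
  assert (hq2 : (2 <= q)%nat) by nia.
  assert (hr2 : (2 <= r)%nat) by nia.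
  set (M := INR (Nat.max p (Nat.max q r))) in hM.
  assert (hpM : INR p <= M) by (apply le_INR; lia).
  assert (hqM : INR q <= M) by (apply le_INR; lia).
  assert (hrM : INR r <= M) by (apply le_INR; lia).
  destruct (exists_polar_form t ltac:(lra)) as [theta htheta].
  exists 1, (Cmod t), theta; split; [lra|split; [|split; [lra|split]]].
  - apply (milnor_radius_gt _ 1 (3 / 2)); try lra.
    intros rho h0 h1; apply (transverse_of_no_critical_point _ (grad_fpqr p q r a));
      [lra|apply is_gradient_fpqr|].
    intros x hx hfx lam; apply sphere5_sqnorm3 in hx.
    apply (no_critical_point_zero_fiber p q r a M); try assumption.
    rewrite hx; split; nra.
  - intros s hs; apply (transverse_of_no_critical_point _ (grad_fpqr p q r a));
      [lra|apply is_gradient_fpqr|].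
    intros x hx hfx lam; apply sphere5_sqnorm3 in hx; rewrite pow1 in hx.
    apply (no_critical_point_unit_sphere p q r a M); try assumption.
    rewrite hfx; lra.
  - intro x; unfold Va; rewrite htheta; tauto.
Qed.
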